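(* Let $m \equiv 3 \pmod 4$ with $m > 3$, $n = 3^m - 1$, $v = (3^{(m-1)/2}-1)/2$ and $\delta = (3^{(m-1)/2}+11)/2$. Then $\gcd(v,n) = 1$, and, setting $T_{(1,2,m)}(v) = \{ vi \bmod n : i \in T_{(1,2,m)}\}$, we have $\{1, 2, \ldots, \delta-1\} \subseteq T_{(1,2,m)}(v)$.
   Context: For an integer $0 \le j \le n-1$ with $3$-adic expansion $j = \sum_{t=0}^{m-1} j_t 3^t$, $j_t \in \{0,1,2\}$, let $w_3(j) = \sum_{t=0}^{m-1} j_t$. For distinct $i_1,i_2 \in \{0,1,2,3\}$, $T_{(i_1,i_2,m)} = \{1 \le j \le n-1 : w_3(j) \equiv i_1 \text{ or } i_2 \pmod 4\}$. For an integer $b$, $b \bmod n$ is the unique $b_0 \in \{0,\ldots,n-1\}$ with $b \equiv b_0 \pmod n$. *)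

From mathcomp Require Import all_boot.
Set Implicit Arguments. Unset Strict Implicit. Unset Printing Implicit Defensive.

Definition w3 (m j : nat) : nat := \sum_(t < m) ((j %/ 3 ^ t) %% 3).

Definition T_set (i1 i2 m : nat) : pred nat :=
  fun j => [&& 1 <= j, j <= 3 ^ m - 2 &
               ((w3 m j %% 4 == i1) || (w3 m j %% 4 == i2))].

Definition T_scaled (i1 i2 m v : nat) : pred nat :=
  fun k => [exists i : 'I_(3 ^ m), T_set i1 i2 m i && (k == (v * i) %% (3 ^ m - 1))].

From mathcomp Require Import all_boot zify ring.

(* Write m = 2h + 1 and 3^h = 2v + 1; v is odd because h is, whence
   gcd(v, n) = gcd(v, 2) = 1.  Then 3^(h+1) = 6v + 3 and n = 3^m - 1 =
   12v^2 + 12v + 2, so v (a 3^(h+1) + 3a) = -a mod n for every even a.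
   The base-3 digits of a 3^(h+1) + 3a + c are c followed by the digits of a
   written twice, so for c = 0, 1 its digit sum 2 w3(a) + c is c mod 4, as
   w3(a) has the parity of a.  This yields z with v z = -k mod n and
   w3(z) = 0, 1 mod 4 for k = a and k = a - v; for k = v + 2, v + 4 the
   number z = a 3^(h+1) + 3a - 1 with a = 2, 4 works.  Finally i = n - z has
   the complementary digits, so w3(i) = 2m - w3(z) = 1, 2 mod 4, and
   v i = k mod n. *)

Lemma w3_split s t a b : b < 3 ^ s -> w3 (s + t) (a * 3 ^ s + b) = w3 s b + w3 t a.
Proof.
move=> b_lt; rewrite /w3 big_split_ord; congr (_ + _); apply: eq_bigr => i _ /=.
  have e : 3 ^ s = 3 ^ (s - i.+1) * 3 * 3 ^ i.
    by rewrite -expnSr -expnD; congr (_ ^ _); have := ltn_ord i; lia.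
  by rewrite e !mulnA divnMDl ?expn_gt0 // modnMDl.
by rewrite expnD divnMA divnMDl ?expn_gt0 // (divn_small b_lt) addn0.
Qed.

Lemma w3S t x : w3 t.+1 x = x %% 3 + w3 t (x %/ 3).
Proof.
rewrite -add1n {1}(divn_eq x 3) -{2}(expn1 3) w3_split ?expn1 ?ltn_pmod //.
by rewrite /w3 big_ord1 expn0 divn1 modn_mod.
Qed.

Lemma w3_widen j t c : c < 3 ^ j -> j <= t -> w3 t c = w3 j c.
Proof.
move=> c_lt /subnKC <-; rewrite -[c in LHS]add0n -(mul0n (3 ^ j)) w3_split //.
by rewrite [w3 _ 0]big1 ?addn0 // => i _; rewrite div0n.
Qed.

Lemma odd_w3 t x : x < 3 ^ t -> odd (w3 t x) = odd x.
Proof.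
elim: t x => [|t IH] x x_lt; first by move: x_lt; rewrite expn0 /w3 big_ord0; case: x.
rewrite w3S oddD IH; last by rewrite ltn_divLR // -expnSr.
by rewrite {3}(divn_eq x 3) oddD oddM andbT addbC.
Qed.

Lemma w3_compl t x : x < 3 ^ t -> w3 t (3 ^ t - 1 - x) + w3 t x = t.*2.
Proof.
elim: t x => [|t IH] x x_lt; first by rewrite /w3 !big_ord0.
have x3_lt : x %/ 3 < 3 ^ t by rewrite ltn_divLR // -expnSr.
have x3 := ltn_pmod x (isT : 0 < 3).
have -> : 3 ^ t.+1 - 1 - x = (3 ^ t - 1 - x %/ 3) * 3 + (2 - x %% 3).
  by rewrite expnS {1}(divn_eq x 3); lia.
have digit_lt : 2 - x %% 3 < 3 by lia.
rewrite !w3S modnMDl divnMDl // (divn_small digit_lt) (modn_small digit_lt) addn0.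
by have := IH _ x3_lt; lia.
Qed.

Lemma w3_mirror h a b c : a < 3 ^ h -> b < 3 ^ h -> c < 3 ->
  w3 (h.+1 + h) (a * 3 ^ h.+1 + (b * 3 + c)) = w3 h a + w3 h b + c.
Proof.
move=> a_lt b_lt c_lt; rewrite w3_split; last by rewrite expnSr; lia.
by rewrite w3S modnMDl divnMDl // (modn_small c_lt) (divn_small c_lt) addn0; lia.
Qed.

Lemma w3_mirror_even h a c : a < 3 ^ h -> ~~ odd a -> c < 3 ->
  w3 (h.+1 + h) (a * 3 ^ h.+1 + (a * 3 + c)) %% 4 = c.
Proof.
move=> a_lt a_even c_lt; rewrite w3_mirror //.
have := odd_w3 h a a_lt; lia.
Qed.

Lemma T_scaled_compl m v k z : odd m -> 0 < z < 3 ^ m - 1 -> k < 3 ^ m - 1 ->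
  w3 m z %% 4 <= 1 -> v * z + k = 0 %[mod 3 ^ m - 1] -> T_scaled 1 2 m v k.
Proof.
move=> m_odd /andP[z_gt0 z_lt] k_lt wz vz_k.
have i_lt : 3 ^ m - 1 - z < 3 ^ m by lia.
apply/existsP; exists (Ordinal i_lt); apply/andP; split.
  have /w3_compl : z < 3 ^ m by lia.
  by rewrite /T_set /=; lia.
have vi_k : v * (3 ^ m - 1 - z) + (v * z + k) = v * (3 ^ m - 1) + k.
  by rewrite addnA -mulnDr subnK // ltnW.
by apply/eqP; rewrite /= -(modn_small k_lt) -(modnMDl v k) -vi_k -modnDmr vz_k mod0n addn0.
Qed.

Lemma pow3_mod4 h : odd h -> 3 ^ h %% 4 = 3.
Proof.
move=> h_odd; rewrite -(odd_double_half h) h_odd -mul2n expnD expnM.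
by rewrite mulnC -modnMml -modnXm (_ : 3 ^ 2 %% 4 = 1) // exp1n.
Qed.

Section Witnesses.

Variables h v : nat.
Hypothesis pow3h : 3 ^ h = v.*2.+1.
Hypothesis v_odd : odd v.

Local Notation n := (3 ^ (h.+1 + h) - 1).

Lemma pow3S : 3 ^ h.+1 = 6 * v + 3.
Proof. by rewrite expnS pow3h; lia. Qed.

Lemma pow3_sub1E : n = 12 * v * v + 12 * v + 2.
Proof. by rewrite expnD pow3S pow3h; nia. Qed.

Lemma coprime_v_n : coprime v n.
Proof.
rewrite /coprime pow3_sub1E (_ : 12 * v * v + 12 * v + 2 = (12 * v + 12) * v + 2); last by ring.
by rewrite gcdnMDl -/(coprime v 2) coprimen2 v_odd.
Qed.

Lemma mulv_mirror j c :
  v * (j.*2 * 3 ^ h.+1 + (j.*2 * 3 + c)) + j.*2 = j * n + v * c.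
Proof. by rewrite pow3S pow3_sub1E -!mul2n; ring. Qed.

Let odd_m : odd (h.+1 + h).
Proof. lia. Qed.

Lemma T_scaled_even j : 0 < j <= v -> T_scaled 1 2 (h.+1 + h) v j.*2.
Proof.
move=> /andP[j_gt0 j_le].
apply: (T_scaled_compl _ _ _ (j.*2 * 3 ^ h.+1 + (j.*2 * 3 + 0)) odd_m).
- by rewrite pow3_sub1E pow3S; apply/andP; split; nia.
- by rewrite pow3_sub1E; nia.
- by rewrite w3_mirror_even // ?pow3h ?odd_double //; lia.
- by rewrite mulv_mirror muln0 addn0 modnMl mod0n.
Qed.

Lemma T_scaled_odd k : odd k -> k <= v -> T_scaled 1 2 (h.+1 + h) v k.
Proof.
move=> k_odd k_le; have [j vk] : exists j, j.*2 = v + k by exists (v + k)./2; lia.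
apply: (T_scaled_compl _ _ _ (j.*2 * 3 ^ h.+1 + (j.*2 * 3 + 1)) odd_m).
- by rewrite pow3_sub1E pow3S; apply/andP; split; nia.
- by rewrite pow3_sub1E; nia.
- by rewrite w3_mirror_even ?vk // ?pow3h; lia.
- have := mulv_mirror j 1; rewrite muln1 => congr_j.
  by rewrite (_ : _ + k = j * n) ?modnMl ?mod0n //; lia.
Qed.

Lemma T_scaled_borrow t : 0 < t <= v -> (w3 h t.*2 + w3 h t.*2.-1) %% 4 = 3 ->
  T_scaled 1 2 (h.+1 + h) v (v + t.*2).
Proof.
move=> /andP[t_gt0 t_le] wt.
apply: (T_scaled_compl _ _ _ (t.*2 * 3 ^ h.+1 + (t.*2.-1 * 3 + 2)) odd_m).
- by rewrite pow3_sub1E pow3S; apply/andP; split; nia.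
- by rewrite pow3_sub1E; nia.
- by rewrite w3_mirror ?pow3h; lia.
- have := mulv_mirror t 0.
  rewrite (_ : t.*2 * 3 + 0 = (t.*2.-1 * 3 + 2) + 1); last by lia.
  rewrite addnA mulnDr !muln1 muln0 addn0 => congr_t.
  by rewrite (_ : _ + (v + t.*2) = t * n) ?modnMl ?mod0n //; lia.
Qed.

Lemma T_scaled_upto k : 2 < h -> 0 < k <= v + 5 -> T_scaled 1 2 (h.+1 + h) v k.
Proof.
move=> h_gt2 /andP[k_gt0 k_le].
have v_ge : 13 <= v.
  have : 3 ^ 3 <= 3 ^ h by rewrite leq_exp2l.
  by rewrite pow3h; lia.
case: (boolP (odd k)) => k_odd; last first.
  have [j kj] : exists j, k = j.*2 by exists k./2; lia.
  by rewrite kj; apply: T_scaled_even; lia.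
have [k_le_v | v_lt_k] := leqP k v; first exact: T_scaled_odd.
have w3_small x : x < 9 -> w3 h x = x %% 3 + x %/ 3.
  move=> x_lt; rewrite (@w3_widen 2) //; last lia.
  by rewrite /w3 !big_ord_recr big_ord0 /= expn0 expn1 divn1 (@modn_small (x %/ 3)); lia.
have [-> | ->] : k = v + 1.*2 \/ k = v + 2.*2 by lia.
all: by apply: T_scaled_borrow; rewrite ?w3_small //; lia.
Qed.

End Witnesses.

Theorem lemma4 (m : nat) :
  m %% 4 = 3 -> 3 < m ->
  let n := 3 ^ m - 1 in
  let v := (3 ^ ((m - 1) %/ 2) - 1) %/ 2 in
  let delta := (3 ^ ((m - 1) %/ 2) + 11) %/ 2 in
  coprime v n /\
  (forall k, 1 <= k <= delta - 1 -> T_scaled 1 2 m v k).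
Proof.
move=> m_mod4 m_gt3 /=.
set h := (m - 1) %/ 2; set v := (3 ^ h - 1) %/ 2.
have m_eq : m = h.+1 + h by rewrite /h; lia.
have h_odd : odd h by rewrite /h; lia.
have h_gt2 : 2 < h by rewrite /h; lia.
have pow3h_mod4 := pow3_mod4 _ h_odd.
have pow3h : 3 ^ h = v.*2.+1 by rewrite /v; lia.
have v_odd : odd v by move: pow3h_mod4; rewrite pow3h; lia.
rewrite m_eq; split; first exact: coprime_v_n.
move=> k /andP[k_gt0 k_le]; apply: T_scaled_upto => //.
by rewrite k_gt0; lia.
Qed.
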